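(* For every positive integer $P$, the linear program (NS-LP) defined in the context is a relaxation of problem (NS) with parameter $P$: for every feasible solution $(\boldsymbol{x},\boldsymbol{y},\boldsymbol{r},\boldsymbol{z},\boldsymbol{\theta})$ of (NS) there exists a feasible solution of (NS-LP) with the same $\boldsymbol{x},\boldsymbol{y}$ and objective value no larger; in particular the optimal value of (NS-LP) is at most the optimal value of (NS).
   Context: Network: a directed graph $\mathcal{G}=(\mathcal{I},\mathcal{L})$; link $(i,j)$ has delay $d_{ij}\ge0$ and capacity $C_{ij}$; cloud nodes $\mathcal{V}\subseteq\mathcal{I}$ with capacities $\mu_v$. Services $k\in\mathcal{K}$ have source $S(k)\notin\mathcal{V}$, destination $D(k)\notin\mathcal{V}$, function index set $\mathcal{F}(k)=\{1,\dots,\ell_k\}$, rates $\lambda_s(k)$ for $s\in\mathcal{F}(k)\cup\{0\}$, NFV delays $d_{v,s}(k)$, and E2E thresholds $\Theta_k$; $\sigma>0$ is a constant, $\mathcal{P}=\{1,\dots,P\}$. Convention: for every node $i\in\mathcal{I}$, $x_{i,0}(k)=1$ iff $i=S(k)$ (else $0$), $x_{i,\ell_k+1}(k)=1$ iff $i=D(k)$ (else $0$), and $x_{i,s}(k)=0$ for $i\notin\mathcal{V}$, $s\in\mathcal{F}(k)$. Write $\theta_N(k)=\sum_{v\in\mathcal{V}}\sum_{s\in\mathcal{F}(k)}d_{v,s}(k)x_{v,s}(k)$ and $\theta_L(k)=\sum_{s\in\mathcal{F}(k)\cup\{0\}}\theta(k,s)$; objective $\Phi=\sum_{v}y_v+\sigma\sum_k(\theta_L(k)+\theta_N(k))$.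 Problem (NS): minimize $\Phi$ over $x_{v,s}(k),y_v\in\{0,1\}$, $r(k,s,p),r_{ij}(k,s,p)\ge0$, $z_{ij}(k,s,p)\in\{0,1\}$, $\theta(k,s)\ge0$ subject to: $\sum_{v}x_{v,s}(k)=1$; $x_{v,s}(k)\le y_v$; $\sum_k\sum_{s\in\mathcal{F}(k)}\lambda_s(k)x_{v,s}(k)\le\mu_vy_v$; $\sum_{p}r(k,s,p)=1$; $r_{ij}(k,s,p)=r(k,s,p)z_{ij}(k,s,p)$; $\sum_k\sum_{s\in\mathcal{F}(k)\cup\{0\}}\sum_p\lambda_s(k)r_{ij}(k,s,p)\le C_{ij}$; $\sum_{j:(j,i)\in\mathcal{L}}z_{ji}(k,s,p)-\sum_{j:(i,j)\in\mathcal{L}}z_{ij}(k,s,p)=x_{i,s+1}(k)-x_{i,s}(k)$ for all $i\in\mathcal{I}$; $\theta(k,s)\ge\sum_{(i,j)}d_{ij}z_{ij}(k,s,p)$; $\theta_N(k)+\theta_L(k)\le\Theta_k$ (all for all relevant indices $v\in\mathcal{V},k\in\mathcal{K},s,p\in\mathcal{P},(i,j)\in\mathcal{L}$). Problem (NS-LP): minimize $\Phi$ over continuous variables $x_{v,s}(k),y_v\in[0,1]$, $z_{ij}(k,s)\in[0,1]$, $\theta(k,s)\ge0$ (single path index) subject to: $\sum_v x_{v,s}(k)=1$; $x_{v,s}(k)\le y_v$; $\sum_k\sum_{s\in\mathcal{F}(k)}\lambda_s(k)x_{v,s}(k)\le\mu_vy_v$; $\sum_k\sum_{s\in\mathcal{F}(k)\cup\{0\}}\lambda_s(k)z_{ij}(k,s)\le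 C_{ij}$; $\sum_{j:(j,i)\in\mathcal{L}}z_{ji}(k,s)-\sum_{j:(i,j)\in\mathcal{L}}z_{ij}(k,s)=x_{i,s+1}(k)-x_{i,s}(k)$ for all $i\in\mathcal{I}$; $\theta(k,s)\ge\sum_{(i,j)}d_{ij}z_{ij}(k,s)$; $\theta_N(k)+\theta_L(k)\le\Theta_k$. *)

From HB Require Import structures.
From mathcomp Require Import all_boot all_order all_algebra.
Set Implicit Arguments. Unset Strict Implicit. Unset Printing Implicit Defensive.
Import Order.TTheory GRing.Theory Num.Theory.
Local Open Scope ring_scope.

(* Nodes form the finite type I, services the finite type K.  Functions of service k
   are indexed by nat s in F(k) = {1,...,len k}; path segments by
   s in F(k) ∪ {0} = {0,...,len k}. *)
Record network (R : realFieldType) (I K : finType) := Network {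
  link  : rel I;
  delay : I -> I -> R;
  cap   : I -> I -> R;
  cloud : {set I};
  mu    : I -> R;
  src   : K -> I;
  dst   : K -> I;
  len   : K -> nat;
  lam   : K -> nat -> R;         (* lam k s = lambda_s(k) *)
  nfv   : I -> K -> nat -> R;    (* nfv v k s = d_{v,s}(k) *)
  Theta : K -> R;
  sigma : R }.

Arguments link {R I K}. Arguments delay {R I K}. Arguments cap {R I K}.
Arguments cloud {R I K}. Arguments mu {R I K}. Arguments src {R I K}.
Arguments dst {R I K}. Arguments len {R I K}. Arguments lam {R I K}.
Arguments nfv {R I K}. Arguments Theta {R I K}. Arguments sigma {R I K}.

Definition wf_network (R : realFieldType) (I K : finType) (N : network R I K) :=
  [/\ forall i j, link N i j -> 0 <= delay N i j,
      0 < sigma N,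
      forall k, src N k \notin cloud N &
      forall k, dst N k \notin cloud N].

Definition is01 (R : realFieldType) (a : R) := a = 0 \/ a = 1.
Definition in01 (R : realFieldType) (a : R) := 0 <= a <= 1.

(* Extended placement variables following the convention of the paper:
   x_{i,0}(k) = [i = S(k)], x_{i,ell_k+1}(k) = [i = D(k)],
   x_{i,s}(k) = 0 for i not a cloud node, s in F(k).
   x k s v stands for x_{v,s}(k). *)
Definition xext (R : realFieldType) (I K : finType) (N : network R I K)
  (x : K -> nat -> I -> R) (k : K) (s : nat) (i : I) : R :=
  if s == 0%N then (i == src N k)%:R
  else if s == (len N k).+1 then (i == dst N k)%:R
  else if i \in cloud N then x k s i else 0.

Definition thetaN (R : realFieldType) (I K : finType) (N : network R I K)
  (x : K -> nat -> I -> R) (k : K) : R :=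
  \sum_(v in cloud N) \sum_(1 <= s < (len N k).+1) nfv N v k s * x k s v.

Definition thetaL (R : realFieldType) (K : finType)
  (len : K -> nat) (th : K -> nat -> R) (k : K) : R :=
  \sum_(0 <= s < (len k).+1) th k s.

Definition Phi (R : realFieldType) (I K : finType) (N : network R I K)
  (x : K -> nat -> I -> R) (y : I -> R) (th : K -> nat -> R) : R :=
  \sum_(v in cloud N) y v
  + sigma N * \sum_k (thetaL (len N) th k + thetaN N x k).

(* Feasibility for problem (NS) with P paths.
   r k s p = r(k,s,p), rl k s p i j = r_ij(k,s,p), z k s p i j = z_ij(k,s,p),
   th k s = theta(k,s). *)
Definition NS_feasible (R : realFieldType) (I K : finType) (N : network R I K)
  (P : nat) (x : K -> nat -> I -> R) (y : I -> R)
  (r : K -> nat -> 'I_P -> R) (rl z : K -> nat -> 'I_P -> I -> I -> R)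
  (th : K -> nat -> R) : Prop :=
  (forall k s v, (1 <= s <= len N k)%N -> v \in cloud N -> is01 (x k s v)) /\
  (forall v, v \in cloud N -> is01 (y v)) /\
  (forall k s p, (s <= len N k)%N -> 0 <= r k s p) /\
  (forall k s p i j, (s <= len N k)%N -> link N i j ->
      0 <= rl k s p i j /\ is01 (z k s p i j)) /\
  (forall k s, (s <= len N k)%N -> 0 <= th k s) /\
  (forall k s, (1 <= s <= len N k)%N -> \sum_(v in cloud N) x k s v = 1) /\
  (forall k s v, (1 <= s <= len N k)%N -> v \in cloud N -> x k s v <= y v) /\
  (forall v, v \in cloud N ->
      \sum_k \sum_(1 <= s < (len N k).+1) lam N k s * x k s v <= mu N v * y v) /\
  (forall k s, (s <= len N k)%N -> \sum_(p < P) r k s p = 1) /\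
  (forall k s p i j, (s <= len N k)%N -> link N i j ->
      rl k s p i j = r k s p * z k s p i j) /\
  (forall i j, link N i j ->
      \sum_k \sum_(0 <= s < (len N k).+1) \sum_(p < P)
         lam N k s * rl k s p i j <= cap N i j) /\
  (forall k s p i, (s <= len N k)%N ->
      \sum_(j | link N j i) z k s p j i - \sum_(j | link N i j) z k s p i j
      = xext N x k s.+1 i - xext N x k s i) /\
  (forall k s p, (s <= len N k)%N ->
      \sum_(e : I * I | link N e.1 e.2) delay N e.1 e.2 * z k s p e.1 e.2
      <= th k s) /\
  (forall k, thetaN N x k + thetaL (len N) th k <= Theta N k).

Definition NSLP_feasible (R : realFieldType) (I K : finType) (N : network R I K)
  (x : K -> nat -> I -> R) (y : I -> R)
  (z : K -> nat -> I -> I -> R) (th : K -> nat -> R) : Prop :=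
  (forall k s v, (1 <= s <= len N k)%N -> v \in cloud N -> in01 (x k s v)) /\
  (forall v, v \in cloud N -> in01 (y v)) /\
  (forall k s i j, (s <= len N k)%N -> link N i j -> in01 (z k s i j)) /\
  (forall k s, (s <= len N k)%N -> 0 <= th k s) /\
  (forall k s, (1 <= s <= len N k)%N -> \sum_(v in cloud N) x k s v = 1) /\
  (forall k s v, (1 <= s <= len N k)%N -> v \in cloud N -> x k s v <= y v) /\
  (forall v, v \in cloud N ->
      \sum_k \sum_(1 <= s < (len N k).+1) lam N k s * x k s v <= mu N v * y v) /\
  (forall i j, link N i j ->
      \sum_k \sum_(0 <= s < (len N k).+1) lam N k s * z k s i j <= cap N i j) /\
  (forall k s i, (s <= len N k)%N ->
      \sum_(j | link N j i) z k s j i - \sum_(j | link N i j) z k s i j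
      = xext N x k s.+1 i - xext N x k s i) /\
  (forall k s, (s <= len N k)%N ->
      \sum_(e : I * I | link N e.1 e.2) delay N e.1 e.2 * z k s e.1 e.2
      <= th k s) /\
  (forall k, thetaN N x k + thetaL (len N) th k <= Theta N k).

From HB Require Import structures.
From mathcomp Require Import all_boot all_order all_algebra.
Set Implicit Arguments. Unset Strict Implicit. Unset Printing Implicit Defensive.
Import Order.TTheory GRing.Theory Num.Theory.
Local Open Scope ring_scope.

(* Keep x, y and theta, and replace the P path flows of each segment by their
   average weighted with the split ratios r(k,s,.), i.e.
   z_ij(k,s) = sum_p r(k,s,p) z_ij(k,s,p).  The split ratios are convex
   weights, and every (NS-LP) constraint on z is linear in z with a right-hand
   side independent of p, so it survives the averaging; the link load of the
   average is exactly the (NS) load sum_p lambda r_ij because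
   r_ij = r z.  The objective does not depend on z, so it is unchanged. *)

Lemma is01_in01 (R : realFieldType) (a : R) : is01 a -> in01 a.
Proof. by case=> ->; rewrite /in01 lexx ler01. Qed.

Section ConvexCombination.

Variables (R : realFieldType) (P : nat) (w : 'I_P -> R) (T : finType).

Lemma exchange_convex_comb (Q : pred T) (a : 'I_P -> T -> R) :
  \sum_(j | Q j) \sum_(p < P) w p * a p j
  = \sum_(p < P) w p * \sum_(j | Q j) a p j.
Proof.
rewrite exchange_big /=.
by apply: eq_bigr => p _; rewrite mulr_sumr.
Qed.

Hypothesis w_ge0 : forall p, 0 <= w p.
Hypothesis w_sum1 : \sum_(p < P) w p = 1.

Lemma convex_comb_const (c : R) : \sum_(p < P) w p * c = c.
Proof. by rewrite -mulr_suml w_sum1 mul1r. Qed.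

Lemma convex_comb_le (a : 'I_P -> R) (b : R) :
  (forall p, a p <= b) -> \sum_(p < P) w p * a p <= b.
Proof.
move=> a_le_b; rewrite -[leRHS]convex_comb_const.
by apply: ler_sum => p _; apply: ler_wpM2l.
Qed.

Lemma convex_comb_in01 (a : 'I_P -> R) :
  (forall p, in01 (a p)) -> in01 (\sum_(p < P) w p * a p).
Proof.
move=> a01; apply/andP; split.
  by apply: sumr_ge0 => p _; apply: mulr_ge0 => //; case/andP: (a01 p).
by apply: convex_comb_le => p; case/andP: (a01 p).
Qed.

Lemma convex_comb_sumrB (Qa Qb : pred T) (a b : 'I_P -> T -> R) (c : R) :
  (forall p, \sum_(j | Qa j) a p j - \sum_(j | Qb j) b p j = c) ->
  \sum_(j | Qa j) \sum_(p < P) w p * a p j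
    - \sum_(j | Qb j) \sum_(p < P) w p * b p j = c.
Proof.
move=> each_p; rewrite !exchange_convex_comb -sumrB.
under eq_bigr => p _ do rewrite -mulrBr each_p.
exact: convex_comb_const.
Qed.

Lemma convex_comb_weighted_sum_le (Q : pred T) (c : T -> R)
    (a : 'I_P -> T -> R) (b : R) :
  (forall p, \sum_(j | Q j) c j * a p j <= b) ->
  \sum_(j | Q j) c j * \sum_(p < P) w p * a p j <= b.
Proof.
move=> each_p.
under eq_bigr => j _ do rewrite mulr_sumr (eq_bigr _ (fun p _ => mulrCA _ _ _)).
by rewrite exchange_convex_comb; apply: convex_comb_le.
Qed.

End ConvexCombination.

Lemma link_load_convex_comb (R : realFieldType) (I K : finType)
    (N : network R I K) (P : nat) (r : K -> nat -> 'I_P -> R)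
    (rl z : K -> nat -> 'I_P -> I -> I -> R) (i j : I) :
  (forall k s p, (s <= len N k)%N -> rl k s p i j = r k s p * z k s p i j) ->
  \sum_k \sum_(0 <= s < (len N k).+1)
      lam N k s * \sum_(p < P) r k s p * z k s p i j
  = \sum_k \sum_(0 <= s < (len N k).+1) \sum_(p < P) lam N k s * rl k s p i j.
Proof.
move=> rl_def; apply: eq_bigr => k _; rewrite !big_nat; apply: eq_bigr => s.
rewrite ltnS => s_le; rewrite mulr_sumr.
by apply: eq_bigr => p _; rewrite rl_def.
Qed.

Theorem theorem2 (R : realFieldType) (I K : finType) (N : network R I K)
  (P : nat) :
  wf_network N -> (0 < P)%N ->
  forall (x : K -> nat -> I -> R) (y : I -> R)
         (r : K -> nat -> 'I_P -> R) (rl z : K -> nat -> 'I_P -> I -> I -> R)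
         (th : K -> nat -> R),
  NS_feasible N x y r rl z th ->
  exists (zl : K -> nat -> I -> I -> R) (thl : K -> nat -> R),
    NSLP_feasible N x y zl thl /\ Phi N x y thl <= Phi N x y th.
Proof.
move=> _ _ x y r rl z th [x01 [y01 [r_ge0 [rl_z01 [th_ge0 [x_sum1 [x_le_y
  [node_cap [r_sum1 [rl_def [link_cap [flow [path_delay e2e]]]]]]]]]]]]].
exists (fun k s i j => \sum_(p < P) r k s p * z k s p i j), th; split=> //.
split; first by move=> k s v s_in v_cloud; exact: is01_in01 (x01 k s v s_in v_cloud).
split; first by move=> v v_cloud; exact: is01_in01 (y01 v v_cloud).
split.
  move=> k s i j s_le ij_link.
  apply: (convex_comb_in01 (r_ge0 k s ^~ s_le) (r_sum1 k s s_le)) => p.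
  by case: (rl_z01 k s p i j s_le ij_link) => _ /is01_in01.
do 4 split=> //.
split.
  move=> i j ij_link.
  rewrite (link_load_convex_comb (fun k s p s_le => rl_def k s p i j s_le ij_link)).
  exact: link_cap.
split.
  move=> k s i s_le.
  by apply: (convex_comb_sumrB (r_sum1 k s s_le)) => p; exact: flow.
split=> // k s s_le.
apply: (convex_comb_weighted_sum_le (r_ge0 k s ^~ s_le) (r_sum1 k s s_le)) => p.
exact: path_delay.
Qed.
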